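(* If $\rho$ is an invariant state supported on $\Omega=\{|-\rangle,|+\rangle,\varphi_{0_1},\varphi_{0_N}\}^\perp$, then $\rho Z_k=e^{\beta_k}Z_k\rho$ for all $k=1,\dots,N-1$.
   Context: Fix integers $N\ge 2$ and $n_1\ge n_2\ge\dots\ge n_N\ge 1$. Let $\mathcal H$ be a finite-dimensional complex Hilbert space with orthonormal basis $\{|-\rangle,|+\rangle\}\cup\{|a_k\rangle:1\le k\le N,\ 0\le a\le n_k-1\}$. For vectors $x,y$, $|x\rangle\langle y|$ denotes the operator $u\mapsto\langle y,u\rangle x$. Put $E_k=\mathrm{span}\{|a_k\rangle:0\le a\le n_k-1\}$, $P_k$ the orthogonal projection onto $E_k$, $P_\pm=|\pm\rangle\langle\pm|$, $\zeta_k=e^{2\pi i/n_k}$, and $\varphi_{a_k}=n_k^{-1/2}\sum_{b=0}^{n_k-1}\zeta_k^{-ba}|b_k\rangle$ for $0\le a\le n_k-1$. For $1\le k\le N-1$ let $Z_k=n_k^{-1/2}\sum_{b=0}^{n_{k+1}-1}\sum_{a=0}^{n_k-1}\zeta_k^{ba}|b_{k+1}\rangle\langle a_k|$ (an operator on $\mathcal H$), $|Z|_k=Z_k^*Z_k$. Let $\omega$ range over the set $\{\omega_+,\omega_-,\omega_1,\dots,\omega_{N-1}\}$ of (distinct) Bohr frequencies, and let $\Gamma_{\pm,\omega}>0$, $\gamma_{\pm,\omega}\in\mathbb R$ be constants. Kraus operators: $L_{-,\omega_+}=\sqrt{n_1\Gamma_{-,\omega_+}}|\varphi_{0_1}\rangle\langle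 +|$, $L_{+,\omega_+}=\sqrt{n_1\Gamma_{+,\omega_+}}|+\rangle\langle\varphi_{0_1}|$, $L_{-,\omega_k}=\sqrt{\Gamma_{-,\omega_k}}Z_k$, $L_{+,\omega_k}=\sqrt{\Gamma_{+,\omega_k}}Z_k^*$ ($1\le k\le N-1$), $L_{-,\omega_-}=\sqrt{\Gamma_{-,\omega_-}}|-\rangle\langle\varphi_{0_N}|$, $L_{+,\omega_-}=0$. Effective Hamiltonian $H_{\mathrm{eff}}=n_1\gamma_{-,\omega_+}P_+-n_1\gamma_{+,\omega_+}|\varphi_{0_1}\rangle\langle\varphi_{0_1}|+\gamma_{-,\omega_-}|\varphi_{0_N}\rangle\langle\varphi_{0_N}|-\gamma_{+,\omega_-}P_-+\sum_{k=1}^{N-1}(\gamma_{-,\omega_k}|Z|_k-\gamma_{+,\omega_k}P_{k+1})$. The generator is $\mathcal L(\rho)=-i[H_{\mathrm{eff}},\rho]+\sum_{\omega}\sum_{\epsilon=\pm}\big(L_{\epsilon,\omega}\rho L_{\epsilon,\omega}^*-\tfrac12\{L_{\epsilon,\omega}^*L_{\epsilon,\omega},\rho\}\big)$. A state is a positive operator of trace one; it is invariant if $\mathcal L(\rho)=0$; an operator is supported on a subspace $E$ if its range is contained in $E$. Define $\beta_k$ by $e^{\beta_k}=\Gamma_{-,\omega_k}/\Gamma_{+,\omega_k}$ for $1\le k\le N-1$. *)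

(* Operators on the finite-dimensional Hilbert space
   are represented as matrices  idx -> idx -> R[i]  indexed by the orthonormal
   basis  {|->, |+>} U {|a_k>}. *)
From HB Require Import structures.
From mathcomp Require Import all_boot all_order all_algebra.
From mathcomp Require Import complex.
From mathcomp Require Import reals sequences exp trigo.
Unset Printing Implicit Defensive.
Import Order.TTheory GRing.Theory Num.Theory.
Local Open Scope ring_scope.
Local Open Scope complex_scope.

Section Model.
Context {R : realType}.
Local Notation C := R[i].

(* Number of sites N and site dimensions n_1, ..., n_N.  [n] is indexed by the
   paper's (1-based) site index k; values outside 1..N are irrelevant. *)
Context {N : nat} {n : nat -> nat}.

(* Basis labels: inl false = |->, inl true = |+>,
   inr (existT k a) = |a_{k+1}>  with k : 'I_N (so paper site = val k + 1)
   and a : 'I_(n_{k+1}). *)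
Definition idx : finType := (bool + {k : 'I_N & 'I_(n k.+1)})%type.

Definition vec := idx -> C.
Definition op := idx -> idx -> C.

Definition inner (x y : vec) : C := \sum_(i : idx) (x i)^* * y i.
Definition ketbra (x y : vec) : op := fun i j => x i * (y j)^*.
Definition apply (A : op) (v : vec) : vec := fun i => \sum_(j : idx) A i j * v j.
Definition mulo (A B : op) : op := fun i j => \sum_(l : idx) A i l * B l j.
Definition adj (A : op) : op := fun i j => (A j i)^*.
Definition addo (A B : op) : op := fun i j => A i j + B i j.
Definition subo (A B : op) : op := fun i j => A i j - B i j.
Definition scaleo (c : C) (A : op) : op := fun i j => c * A i j.
Definition zeroo : op := fun _ _ => 0.
Definition trace (A : op) : C := \sum_(i : idx) A i i.

Definition ket_minus : vec := fun j => (j == inl false)%:R.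
Definition ket_plus : vec := fun j => (j == inl true)%:R.
(* |b_k> (paper 1-based site index k) *)
Definition ket_site (k b : nat) : vec := fun j =>
  match j with
  | inl _ => 0
  | inr (existT k' b') => (((val k').+1 == k) && (val b' == b))%:R
  end.

Definition zeta (m : nat) : C :=
  (cos (2 * pi / m%:R))%:C + 'i * (sin (2 * pi / m%:R))%:C.

Definition sqrtC (x : R) : C := (Num.sqrt x)%:C.

Definition phi (k a : nat) : vec := fun j =>
  (sqrtC (n k)%:R)^-1 * \sum_(b < n k) zeta (n k) ^- (b * a) * ket_site k b j.

Definition Zop (k : nat) : op := fun i j =>
  (sqrtC (n k)%:R)^-1 *
  \sum_(b < n k.+1) \sum_(a < n k)
     zeta (n k) ^+ (b * a) * ketbra (ket_site k.+1 b) (ket_site k a) i j.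

Definition absZ (k : nat) : op := mulo (adj (Zop k)) (Zop k).

Definition Pk (k : nat) : op := fun i j =>
  \sum_(a < n k) ketbra (ket_site k a) (ket_site k a) i j.
Definition Pplus : op := ketbra ket_plus ket_plus.
Definition Pminus : op := ketbra ket_minus ket_minus.

(* The constants Gamma_{eps,omega} and gamma_{eps,omega}.  The rates for
   omega_k (1 <= k <= N-1) are given as functions of k. *)
Record constants := Constants {
  Gm_plus : R;
  Gp_plus : R;
  Gm_minus : R;
  Gp_minus : R;
  Gm : nat -> R;
  Gp : nat -> R;
  gm_plus : R;
  gp_plus : R;
  gm_minus : R;
  gp_minus : R;
  gm : nat -> R;
  gp : nat -> R
}.

Definition constants_ok (c : constants) : Prop :=
  [/\ 0 < Gm_plus c, 0 < Gp_plus c, 0 < Gm_minus c, 0 < Gp_minus c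
    & forall k, (1 <= k <= N - 1)%N -> 0 < Gm c k /\ 0 < Gp c k].

Variable c : constants.

Definition L_m_plus : op :=
  scaleo (sqrtC ((n 1)%:R * Gm_plus c)) (ketbra (phi 1 0) ket_plus).
Definition L_p_plus : op :=
  scaleo (sqrtC ((n 1)%:R * Gp_plus c)) (ketbra ket_plus (phi 1 0)).
Definition L_m (k : nat) : op := scaleo (sqrtC (Gm c k)) (Zop k).
Definition L_p (k : nat) : op := scaleo (sqrtC (Gp c k)) (adj (Zop k)).
Definition L_m_minus : op :=
  scaleo (sqrtC (Gm_minus c)) (ketbra ket_minus (phi N 0)).
Definition L_p_minus : op := zeroo.

Definition Heff : op := fun i j =>
  ((n 1)%:R * gm_plus c)%:C * Pplus i j
  - ((n 1)%:R * gp_plus c)%:C * ketbra (phi 1 0) (phi 1 0) i j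
  + (gm_minus c)%:C * ketbra (phi N 0) (phi N 0) i j
  - (gp_minus c)%:C * Pminus i j
  + \sum_(1 <= k < N) ((gm c k)%:C * absZ k i j - (gp c k)%:C * Pk k.+1 i j).

Definition diss (L rho : op) : op := fun i j =>
  mulo (mulo L rho) (adj L) i j
  - 2^-1 * (mulo (mulo (adj L) L) rho i j + mulo rho (mulo (adj L) L) i j).

Definition commo (A B : op) : op := fun i j => mulo A B i j - mulo B A i j.

Definition gen (rho : op) : op := fun i j =>
  - 'i * commo Heff rho i j
  + (diss L_m_plus rho i j + diss L_p_plus rho i j)
  + \sum_(1 <= k < N) (diss (L_m k) rho i j + diss (L_p k) rho i j)
  + (diss L_m_minus rho i j + diss L_p_minus rho i j).

Definition is_invariant (rho : op) : Prop := gen rho = zeroo.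

End Model.

Arguments constants R : clear implicits.
Arguments idx : clear implicits.
Arguments vec R N n : clear implicits.
Arguments op R N n : clear implicits.
Arguments Constants {R}.
Arguments constants_ok {R} N c.

Definition positive_op {R : realType} {N n} (A : op R N n) : Prop :=
  forall v : vec R N n, 0 <= inner v (apply A v).
Definition is_state {R : realType} {N n} (rho : op R N n) : Prop :=
  positive_op rho /\ trace rho = 1.

Definition perp {R : realType} {N n} (S : vec R N n -> Prop) (v : vec R N n) : Prop :=
  forall w, S w -> inner w v = 0.
Definition supported_on {R : realType} {N n} (A : op R N n) (E : vec R N n -> Prop) :=
  forall u, E (apply A u).

Definition Omega {R : realType} {N n} (w : vec R N n) : Prop :=
  w = ket_minus \/ w = ket_plus \/ w = phi 1 0 \/ w = phi N 0.

Definition beta {R : realType} (c : constants R) (k : nat) : R :=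
  ln (Gm c k / Gp c k).

(* A positive rho is Hermitian, and as its range is orthogonal to Omega the
   four boundary Kraus operators annihilate it; what is left of L(rho) is
   -i[H_eff, rho] plus the dissipators of the Z_k and Z_k^*.  Grouping the basis
   by sites, H_eff is block diagonal and Z_k maps site k to site k+1, so for A, B
   diagonal by site the functional X |-> tr((A rho B + B rho A) X) kills the
   Hamiltonian part.  Pairing L(rho) = 0 with A = 1 - P_t, B = P_t (P_t the
   projection on site t) turns it into a vanishing sum of nonpositive terms,
   whence Z_k rho = Z_k rho P_k and Z_k^* rho = Z_k^* rho P_(k+1).  Pairing it
   then with A = W, B = 1, where W is diagonal with detailed-balance weights
   w_(k+1) Gamma_(-,k) = w_k Gamma_(+,k), gives
   0 = -2 sum_k Gamma_(+,k) w_(k+1) ||rho Z_k - e^beta_k Z_k rho||^2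
   in the Hilbert-Schmidt norm. *)

From Pilot Require Import Defs.
From HB Require Import structures.
From mathcomp Require Import all_boot all_order all_algebra.
From mathcomp Require Import complex ring zify.
From mathcomp Require Import boolp reals sequences exp trigo.
Import Order.TTheory GRing.Theory Num.Theory.
Local Open Scope ring_scope.
Local Open Scope complex_scope.

Lemma ltr0c (R : rcfType) (x : R) : (0 < x%:C) = (0 < x).
Proof. by rewrite ltcE /= eqxx. Qed.

Lemma nsumr_nat_eq0 (K : numDomainType) (F : nat -> K) (m p : nat) :
  (forall k, (m <= k < p)%N -> F k <= 0) -> \sum_(m <= k < p) F k = 0 ->
  forall k, (m <= k < p)%N -> F k = 0.
Proof.
move=> F_le0 /eqP; rewrite -oppr_eq0 -sumrN big_nat_cond psumr_eq0 => [/allP NF0 k k_in|k].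
  by apply/eqP; rewrite -oppr_eq0; have := NF0 k; rewrite mem_index_iota k_in => /(_ isT).
by move=> /andP [/F_le0]; rewrite oppr_ge0.
Qed.

Section Operators.
Context {R : realType} {N : nat} {n : nat -> nat}.
Local Notation C := R[i].
Local Notation I := (idx N n).
Local Notation O := (op R N n).
Local Notation "A ** B" := (mulo A B) (at level 40, left associativity).

Lemma op_ext (A B : O) : (forall i j, A i j = B i j) -> A = B.
Proof. by move=> eqAB; apply: funext => i; apply: funext => j; apply: eqAB. Qed.

Lemma sum_delta_l (a : I) (F : I -> C) : \sum_(l : I) (l == a)%:R * F l = F a.
Proof.
rewrite (bigD1 a) //= eqxx mul1r big1 ?addr0 // => l /negbTE ->.
by rewrite mul0r.
Qed.

Lemma sum_delta_r (a : I) (F : I -> C) : \sum_(l : I) F l * (l == a)%:R = F a.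
Proof. by rewrite -[RHS]sum_delta_l; apply: eq_bigr => l _; rewrite mulrC. Qed.

Lemma muloA (A B D : O) : A ** B ** D = A ** (B ** D).
Proof.
apply: op_ext => i j; rewrite /mulo.
under eq_bigr do rewrite mulr_suml.
rewrite exchange_big /=; apply: eq_bigr => l _.
by rewrite mulr_sumr; apply: eq_bigr => m _; rewrite mulrA.
Qed.

Lemma muloDr (A B D : O) : A ** addo B D = addo (A ** B) (A ** D).
Proof.
apply: op_ext => i j; rewrite /mulo /addo -big_split.
by apply: eq_bigr => l _; rewrite mulrDr.
Qed.

Lemma muloBr (A B D : O) : A ** subo B D = subo (A ** B) (A ** D).
Proof.
apply: op_ext => i j; rewrite /mulo /subo -sumrB.
by apply: eq_bigr => l _; rewrite mulrBr.
Qed.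

Lemma muloBl (A B D : O) : subo A B ** D = subo (A ** D) (B ** D).
Proof.
apply: op_ext => i j; rewrite /mulo /subo -sumrB.
by apply: eq_bigr => l _; rewrite mulrBl.
Qed.

Lemma muloZl (s : C) (A B : O) : scaleo s A ** B = scaleo s (A ** B).
Proof.
apply: op_ext => i j; rewrite /mulo /scaleo mulr_sumr.
by apply: eq_bigr => l _; rewrite mulrA.
Qed.

Lemma muloZr (s : C) (A B : O) : A ** scaleo s B = scaleo s (A ** B).
Proof.
apply: op_ext => i j; rewrite /mulo /scaleo mulr_sumr.
by apply: eq_bigr => l _; rewrite mulrCA.
Qed.

Lemma mul0o (A : O) : zeroo ** A = zeroo.
Proof. by apply: op_ext => i j; rewrite /mulo big1 // => l _; rewrite mul0r. Qed.

Lemma mulo0 (A : O) : A ** zeroo = zeroo.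
Proof. by apply: op_ext => i j; rewrite /mulo big1 // => l _; rewrite mulr0. Qed.

Lemma adjoK (A : O) : adj (adj A) = A.
Proof. by apply: op_ext => i j; rewrite /adj conjcK. Qed.

Lemma adjoM (A B : O) : adj (A ** B) = adj B ** adj A.
Proof.
apply: op_ext => i j; rewrite /adj /mulo rmorph_sum.
by apply: eq_bigr => l _; rewrite rmorphM mulrC.
Qed.

Lemma adjoZ (s : C) (A : O) : adj (scaleo s A) = scaleo (conjc s) (adj A).
Proof. by apply: op_ext => i j; rewrite /adj /scaleo rmorphM. Qed.

Lemma adjoB (A B : O) : adj (subo A B) = subo (adj A) (adj B).
Proof. by apply: op_ext => i j; rewrite /adj /subo rmorphB. Qed.

Lemma adjo0 : adj (zeroo : O) = zeroo.
Proof. by apply: op_ext => i j; rewrite /adj conjc0. Qed.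

Lemma trace_mulC (A B : O) : trace (A ** B) = trace (B ** A).
Proof.
rewrite /trace /mulo exchange_big /=; apply: eq_bigr => i _.
by apply: eq_bigr => j _; rewrite mulrC.
Qed.

Lemma traceD (A B : O) : trace (addo A B) = trace A + trace B.
Proof. by rewrite /trace /addo big_split. Qed.

Lemma traceB (A B : O) : trace (subo A B) = trace A - trace B.
Proof. by rewrite /trace /subo sumrB. Qed.

Lemma traceZ (s : C) (A : O) : trace (scaleo s A) = s * trace A.
Proof. by rewrite /trace /scaleo mulr_sumr. Qed.

Lemma trace0 : trace (zeroo : O) = 0.
Proof. by rewrite /trace big1. Qed.

Definition sumo (F : nat -> O) : O := fun i j => \sum_(1 <= k < N) F k i j.

Lemma mulo_sumr (A : O) (F : nat -> O) : A ** sumo F = sumo (fun k => A ** F k).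
Proof.
apply: op_ext => i j; rewrite /mulo /sumo.
by under eq_bigr do rewrite mulr_sumr; rewrite exchange_big.
Qed.

Lemma trace_sumo (F : nat -> O) : trace (sumo F) = \sum_(1 <= k < N) trace (F k).
Proof. by rewrite /trace /sumo exchange_big. Qed.

Definition hsnorm (Y : O) : C := trace (Y ** adj Y).

Lemma hsnorm_ge0 (Y : O) : 0 <= hsnorm Y.
Proof. by apply: sumr_ge0 => i _; apply: sumr_ge0 => l _; apply: mul_conjC_ge0. Qed.

Lemma hsnorm_eq0 (Y : O) : hsnorm Y = 0 -> Y = zeroo.
Proof.
have entry_ge0 i l : 0 <= Y i l * (Y i l)^* := mul_conjC_ge0 _.
rewrite -[hsnorm Y]/(\sum_i \sum_l Y i l * (Y i l)^*) => /eqP.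
rewrite psumr_eq0 => [/allP Y0|i _]; last exact: sumr_ge0.
apply: op_ext => i j; move: (Y0 i (mem_index_enum i)); rewrite /= psumr_eq0 //.
by move=> /allP /(_ j (mem_index_enum j)); rewrite /= mul_conjC_eq0 => /eqP.
Qed.

Lemma eq0_of_scale_conj (d : C) : (forall s : C, s * d = conjc s * conjc d) -> d = 0.
Proof.
move=> scale_conj; have d_real := scale_conj 1.
rewrite rmorph1 !mul1r in d_real.
have conj_i : conjc 'i = - 'i :> C by apply/eqP; rewrite eq_complex /= oppr0 !eqxx.
have : ('i * d) *+ 2 = 0 :> C.
  by rewrite mulr2n [X in _ + X]scale_conj conj_i -d_real mulNr subrr.
move=> /eqP; rewrite mulrn_eq0 /= => /eqP i_d0.
by rewrite -[d]mul1r -[1]opprK -sqr_i expr2 mulNr -mulrA i_d0 mulr0 oppr0.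
Qed.

Lemma inner_apply_pair (A : O) (a b : I) (s : C) :
  let v := fun l => (l == a)%:R + s * (l == b)%:R in
  inner v (apply A v) = A a a + s * A a b + conjc s * (A b a + s * A b b).
Proof.
have Av : apply A (fun l => (l == a)%:R + s * (l == b)%:R) = fun i => A i a + s * A i b.
  apply: funext => i; rewrite /apply.
  under eq_bigr do rewrite mulrDr mulrCA.
  by rewrite big_split /= -mulr_sumr !sum_delta_r.
rewrite /= Av /inner.
under eq_bigr do rewrite rmorphD rmorphM !rmorph_nat mulrDl mulrAC.
by rewrite big_split /= sum_delta_l (sum_delta_r b (fun i => conjc s * (A i a + s * A i b))).
Qed.

Lemma positive_op_adj {A : O} : positive_op A -> adj A = A.
Proof.
move=> A_pos.
have form_real a b s :
    conjc (A a a + s * A a b + conjc s * (A b a + s * A b b)) =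
    A a a + s * A a b + conjc s * (A b a + s * A b b).
  by apply/conj_Creal/ger0_real; rewrite -inner_apply_pair; apply: A_pos.
have diag_real a : conjc (A a a) = A a a.
  by have := form_real a a 0; rewrite !mul0r rmorph0 !mul0r !addr0.
apply: op_ext => i j; rewrite /adj; apply/eqP; rewrite eq_sym -subr_eq0; apply/eqP.
apply: eq0_of_scale_conj => s; move: (form_real i j s).
rewrite !(rmorphD, rmorphM, rmorphB, rmorphN) /= !conjcK !diag_real => /eqP.
by rewrite -subr_eq0 => /eqP E; rewrite -[LHS]addr0 -E; ring.
Qed.

(* Site 0 carries |-> and |+>; the vector |a_k> lies at site k, the paper's
   1-based index. *)
Definition site (i : I) : nat :=
  match i with inl _ => 0 | inr (existT k _) => (val k).+1 end.

Definition site_diag (g : nat -> C) : O := fun i j => (i == j)%:R * g (site i).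

Definition site_proj (P : pred nat) : O := site_diag (fun t => (P t)%:R).

Definition hops (p q : nat) (L : O) :=
  (forall i j, site i != q -> L i j = 0) /\ (forall i j, site j != p -> L i j = 0).

Definition block_diag (H : O) := forall i j, site i != site j -> H i j = 0.

Lemma site_diag_mull (g : nat -> C) (A : O) :
  site_diag g ** A = fun i j => g (site i) * A i j.
Proof.
apply: op_ext => i j; rewrite /mulo /site_diag -(sum_delta_l i (fun l => g (site l) * A l j)).
by apply: eq_bigr => l _; rewrite eq_sym; case: eqP => [->|_]; rewrite ?mul0r ?mul1r.
Qed.

Lemma site_diag_mulr (g : nat -> C) (A : O) :
  A ** site_diag g = fun i j => A i j * g (site j).
Proof.
apply: op_ext => i j; rewrite /mulo /site_diag -(sum_delta_r j (fun l => A i l * g (site l))).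
by apply: eq_bigr => l _; case: eqP => [->|_]; rewrite ?mul0r ?mulr0 ?mul1r ?mulr1.
Qed.

Lemma site_projT_mull (A : O) : site_proj predT ** A = A.
Proof. by rewrite site_diag_mull; apply: op_ext => i j; rewrite mul1r. Qed.

Lemma site_projT_mulr (A : O) : A ** site_proj predT = A.
Proof. by rewrite site_diag_mulr; apply: op_ext => i j; rewrite mulr1. Qed.

Lemma site_proj_idem (P : pred nat) : site_proj P ** site_proj P = site_proj P.
Proof.
rewrite site_diag_mull; apply: op_ext => i j; rewrite /site_proj /site_diag mulrCA.
by case: (P _); rewrite ?mulr1 ?mulr0.
Qed.

Lemma adjo_site_proj (P : pred nat) : adj (site_proj P) = site_proj P.
Proof.
apply: op_ext => i j; rewrite /adj /site_proj /site_diag rmorphM !rmorph_nat eq_sym.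
by case: eqP => [->|_]; rewrite ?mul0r.
Qed.

Lemma mulo_site_diag_of_proj_eq0 (X : O) (p : nat) (w : nat -> C) :
  X ** site_proj (predC1 p) = zeroo -> X ** site_diag w = scaleo (w p) X.
Proof.
move=> X_off; rewrite site_diag_mulr; apply: op_ext => i j; rewrite /scaleo.
case: (eqVneq (site j) p) => [->|off_p]; first by rewrite mulrC.
have := congr1 (fun M => M i j) X_off; rewrite site_diag_mulr /= off_p => /= Xij0.
by rewrite -[X i j]mulr1 Xij0 !mul0r mulr0.
Qed.

Lemma hops_adj {p q : nat} {L : O} : hops p q L -> hops q p (adj L).
Proof.
case=> Lq Lp; split=> i j off; rewrite /adj; first by rewrite Lp // conjc0.
by rewrite Lq // conjc0.
Qed.

Lemma site_diag_hops (g : nat -> C) {p q : nat} {L : O} :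
  hops p q L -> site_diag g ** L = scaleo (g q) L.
Proof.
case=> Lq _; rewrite site_diag_mull; apply: op_ext => i j; rewrite /scaleo.
by case: (eqVneq (site i) q) => [->//|off]; rewrite Lq // !mulr0.
Qed.

Lemma hops_site_diag (g : nat -> C) {p q : nat} {L : O} :
  hops p q L -> L ** site_diag g = scaleo (g p) L.
Proof.
case=> _ Lp; rewrite site_diag_mulr; apply: op_ext => i j; rewrite /scaleo.
case: (eqVneq (site j) p) => [->|off]; first by rewrite mulrC.
by rewrite Lp // !mulr0 mul0r.
Qed.

Lemma block_diag_site_diagC (g : nat -> C) (H : O) :
  block_diag H -> site_diag g ** H = H ** site_diag g.
Proof.
move=> H_block; rewrite site_diag_mull site_diag_mulr; apply: op_ext => i j.
case: (eqVneq (site i) (site j)) => [->|off]; first by rewrite mulrC.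
by rewrite H_block // mulr0 mul0r.
Qed.

End Operators.

Section Dissipation.
Context {R : realType} {N : nat} {n : nat -> nat}.
Local Notation C := R[i].
Local Notation O := (op R N n).
Local Notation "A ** B" := (mulo A B) (at level 40, left associativity).

Variable rho : O.
Hypothesis rho_herm : adj rho = rho.

Definition pairing (A B X : O) : C :=
  trace (A ** rho ** B ** X) + trace (B ** rho ** A ** X).

Lemma pairingD (A B X Y : O) : pairing A B (addo X Y) = pairing A B X + pairing A B Y.
Proof. by rewrite /pairing !muloDr !traceD addrACA. Qed.

Lemma pairingB (A B X Y : O) : pairing A B (subo X Y) = pairing A B X - pairing A B Y.
Proof. by rewrite /pairing !muloBr !traceB addrACA opprD. Qed.

Lemma pairingZ (A B X : O) (s : C) : pairing A B (scaleo s X) = s * pairing A B X.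
Proof. by rewrite /pairing !muloZr !traceZ mulrDr. Qed.

Lemma pairing0 (A B : O) : pairing A B zeroo = 0.
Proof. by rewrite /pairing !mulo0 trace0 addr0. Qed.

Lemma pairing_sumo (A B : O) (F : nat -> O) :
  pairing A B (sumo F) = \sum_(1 <= k < N) pairing A B (F k).
Proof. by rewrite /pairing !mulo_sumr !trace_sumo -big_split. Qed.

Lemma pairing_commo (A B H : O) :
  A ** H = H ** A -> B ** H = H ** B -> pairing A B (commo H rho) = 0.
Proof.
have swap X Y : X ** H = H ** X ->
    trace (X ** rho ** Y ** (rho ** H)) = trace (Y ** rho ** X ** (H ** rho)).
  by move=> XH; rewrite !muloA trace_mulC !muloA -XH [LHS]trace_mulC !muloA.
move=> AH BH; rewrite -[commo H rho]/(subo (H ** rho) (rho ** H)) pairingB /pairing.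
by rewrite (swap _ _ AH) (swap _ _ BH) [X in _ - X]addrC subrr.
Qed.

Lemma dissE (L : O) : diss L rho =
  subo (L ** rho ** adj L) (scaleo 2^-1 (addo (adj L ** L ** rho) (rho ** (adj L ** L)))).
Proof. by []. Qed.

Lemma diss_scale (s : C) (L : O) :
  diss (scaleo s L) rho = scaleo (s * conjc s) (diss L rho).
Proof.
rewrite !dissE adjoZ !muloZl !muloZr !muloZl.
by apply: op_ext => i j; rewrite /subo /scaleo /addo; ring.
Qed.

Lemma diss_eq0 (L : O) : L ** rho = zeroo -> diss L rho = zeroo.
Proof.
move=> L_rho; have rho_adjL : rho ** adj L = zeroo by rewrite -rho_herm -adjoM L_rho adjo0.
rewrite dissE L_rho mul0o muloA L_rho mulo0 -muloA rho_adjL mul0o.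
by apply: op_ext => i j; rewrite /subo /scaleo /addo /zeroo addr0 mulr0 subr0.
Qed.

Lemma hsnorm_mul_rho (X : O) : hsnorm (X ** rho) = trace (X ** rho ** rho ** adj X).
Proof. by rewrite /hsnorm adjoM rho_herm !muloA. Qed.

Lemma hsnorm_mul_rho_proj (X : O) (P : pred nat) :
  hsnorm (X ** rho ** site_proj P) = trace (X ** rho ** site_proj P ** rho ** adj X).
Proof.
rewrite /hsnorm !adjoM rho_herm adjo_site_proj !muloA.
by rewrite -[site_proj P ** (site_proj P ** _)]muloA site_proj_idem.
Qed.

Lemma trace_jump (a b : nat -> C) {p q : nat} {L : O} : hops p q L ->
  trace (site_diag a ** rho ** site_diag b ** (L ** rho ** adj L)) =
  a q * b q * trace (rho ** L ** rho ** adj L).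
Proof.
move=> hL; rewrite -!muloA (muloA _ (site_diag b)) (site_diag_hops _ hL) muloZr !muloZl.
rewrite traceZ trace_mulC -!muloA (hops_site_diag _ (hops_adj hL)) !muloZl traceZ.
by rewrite [in RHS]trace_mulC !muloA mulrCA mulrA.
Qed.

Lemma trace_loss_l (P : pred nat) (b : nat -> C) {p q : nat} {L : O} : hops p q L ->
  trace (site_proj P ** rho ** site_diag b ** (adj L ** L ** rho)) =
  b p * hsnorm (L ** rho ** site_proj P).
Proof.
move=> hL; rewrite hsnorm_mul_rho_proj -!muloA (muloA _ (site_diag b)).
rewrite (site_diag_hops _ (hops_adj hL)) muloZr !muloZl traceZ; congr (_ * _).
by rewrite (muloA _ L rho) trace_mulC !muloA.
Qed.

Lemma trace_loss_r (a : nat -> C) (Q : pred nat) {p q : nat} {L : O} : hops p q L ->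
  trace (site_diag a ** rho ** site_proj Q ** (rho ** (adj L ** L))) =
  a p * hsnorm (L ** rho ** site_proj Q).
Proof.
move=> hL; rewrite hsnorm_mul_rho_proj !muloA trace_mulC !muloA.
rewrite (hops_site_diag _ hL) !muloZr traceZ; congr (_ * _).
by rewrite [RHS]trace_mulC !muloA.
Qed.

Lemma pairing_split_diss (t : nat) {p q : nat} {L : O} : hops p q L ->
  pairing (site_proj (predC1 t)) (site_proj (pred1 t)) (diss L rho) =
  - ((p == t)%:R * hsnorm (L ** rho ** site_proj (predC1 t)) +
     (p != t)%:R * hsnorm (L ** rho ** site_proj (pred1 t))).
Proof.
move=> hL; rewrite dissE pairingB pairingZ pairingD /pairing.
rewrite !(trace_jump _ _ hL) !(trace_loss_l _ _ hL) !(trace_loss_r _ _ hL) /=.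
have qt0 : (q != t)%:R * (q == t)%:R = 0 :> C by case: eqP; rewrite ?mulr0 ?mul0r.
by rewrite qt0 [(q == t)%:R * _]mulrC qt0; field.
Qed.

Lemma pairing_weight_diss (w : nat -> C) {p q : nat} {L : O} : hops p q L ->
  L ** rho ** site_proj (predC1 p) = zeroo ->
  pairing (site_diag w) (site_proj predT) (diss L rho) =
  2 * w q * trace (rho ** L ** rho ** adj L) - 2 * w p * hsnorm (L ** rho).
Proof.
move=> hL /(mulo_site_diag_of_proj_eq0 _ _ w) L_rho_W.
rewrite dissE pairingB pairingZ pairingD /pairing !(trace_jump _ _ hL) /= mulr1n mulr1 mul1r.
rewrite site_projT_mulr site_projT_mull hsnorm_mul_rho.
have L_rho_W_rho : trace (L ** rho ** site_diag w ** rho ** adj L) =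
    w p * trace (L ** rho ** rho ** adj L) by rewrite L_rho_W !muloZl traceZ.
have W_adjL := site_diag_hops w (hops_adj hL).
have L_W := hops_site_diag w hL.
have -> : trace (site_diag w ** rho ** (adj L ** L ** rho)) =
    w p * trace (L ** rho ** rho ** adj L).
  by rewrite -!muloA (muloA _ L rho) trace_mulC -!muloA L_rho_W_rho.
have -> : trace (rho ** site_diag w ** (adj L ** L ** rho)) =
    w p * trace (L ** rho ** rho ** adj L).
  rewrite -!muloA (muloA rho) W_adjL muloZr !muloZl traceZ; congr (_ * _).
  by rewrite !muloA trace_mulC !muloA trace_mulC !muloA.
have -> : trace (site_diag w ** rho ** (rho ** (adj L ** L))) =
    w p * trace (L ** rho ** rho ** adj L).
  rewrite !muloA trace_mulC !muloA L_W !muloZr traceZ; congr (_ * _).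
  by rewrite [RHS]trace_mulC !muloA.
have -> : trace (rho ** site_diag w ** (rho ** (adj L ** L))) =
    w p * trace (L ** rho ** rho ** adj L).
  by rewrite -!muloA trace_mulC -!muloA L_rho_W_rho.
by field.
Qed.

Lemma hsnorm_twisted_commutator (Z : O) (e : C) : conjc e = e ->
  hsnorm (subo (rho ** Z) (scaleo e (Z ** rho))) =
  hsnorm (adj Z ** rho) - 2 * e * trace (rho ** Z ** rho ** adj Z) +
  e * e * hsnorm (Z ** rho).
Proof.
move=> e_real.
rewrite /hsnorm adjoB adjoZ !adjoM rho_herm e_real adjoK !muloBl !muloBr.
rewrite !muloZl !muloZr !traceB !traceZ.
have -> : trace (rho ** Z ** (adj Z ** rho)) = trace (adj Z ** rho ** (rho ** Z)).
  by rewrite trace_mulC.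
have -> : trace (Z ** rho ** (adj Z ** rho)) = trace (rho ** Z ** rho ** adj Z).
  by rewrite -!muloA [LHS]trace_mulC !muloA.
have -> : trace (rho ** Z ** (rho ** adj Z)) = trace (rho ** Z ** rho ** adj Z).
  by rewrite !muloA.
ring.
Qed.

Lemma trace_sandwich_adj (Z : O) :
  trace (rho ** adj Z ** rho ** adj (adj Z)) = trace (rho ** Z ** rho ** adj Z).
Proof. by rewrite adjoK trace_mulC -!muloA [LHS]trace_mulC !muloA. Qed.

End Dissipation.

Section Model.
Context {R : realType} {N : nat} {n : nat -> nat}.
Local Notation C := R[i].
Local Notation O := (op R N n).
Local Notation V := (vec R N n).
Local Notation "A ** B" := (mulo A B) (at level 40, left associativity).

Definition on_site (s : nat) (v : V) := forall i, site i != s -> v i = 0.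

Lemma on_site_ket_plus : on_site 0 ket_plus.
Proof. by case=> [x|[k a]]. Qed.

Lemma on_site_ket_minus : on_site 0 ket_minus.
Proof. by case=> [x|[k a]]. Qed.

Lemma on_site_ket_site (s b : nat) : on_site s (ket_site s b).
Proof. by case=> [//|[k a]] /= off; rewrite (negbTE off). Qed.

Lemma on_site_phi (s a : nat) : on_site s (phi s a).
Proof.
move=> i off; rewrite /phi big1 ?mulr0 // => b _.
by rewrite on_site_ket_site // mulr0.
Qed.

Lemma ketbra_block_diag {s : nat} {x y : V} :
  on_site s x -> on_site s y -> block_diag (ketbra x y).
Proof.
move=> x_on y_on i j off; rewrite /ketbra.
case: (eqVneq (site i) s) => [i_s|i_off]; last by rewrite x_on // mul0r.
have j_off : site j != s by rewrite -i_s eq_sym.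
by rewrite (y_on j j_off) conjC0 mulr0.
Qed.

Lemma hops_adj_mul_block_diag {p q : nat} {L : O} : hops p q L -> block_diag (adj L ** L).
Proof.
case=> _ Lp i j off; rewrite /mulo big1 // => l _; rewrite /adj.
case: (eqVneq (site i) p) => [i_p|i_off]; last by rewrite Lp // conjc0 mul0r.
have j_off : site j != p by rewrite -i_p eq_sym.
by rewrite (Lp l j j_off) mulr0.
Qed.

Lemma Zop_hops (k : nat) : hops k k.+1 (Zop k : O).
Proof.
split=> i j off; rewrite /Zop big1 ?mulr0 // => b _; rewrite big1 // => a _.
  by rewrite /ketbra on_site_ket_site // mul0r mulr0.
by rewrite /ketbra (on_site_ket_site _ _ j off) conjC0 !mulr0.
Qed.

Lemma Heff_block_diag (c : constants R) : block_diag (Heff c : O).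
Proof.
move=> i j off; rewrite /Heff /Pplus /Pminus.
rewrite !(ketbra_block_diag on_site_ket_plus on_site_ket_plus _ _ off).
rewrite !(ketbra_block_diag (on_site_phi 1 0) (on_site_phi 1 0) _ _ off).
rewrite !(ketbra_block_diag (on_site_phi N 0) (on_site_phi N 0) _ _ off).
rewrite !(ketbra_block_diag on_site_ket_minus on_site_ket_minus _ _ off).
rewrite !mulr0 !subr0 !addr0 add0r big1 // => k _.
rewrite /absZ (hops_adj_mul_block_diag (Zop_hops k) _ _ off) /Pk big1 ?mulr0 ?subr0 // => a _.
exact: ketbra_block_diag (on_site_ket_site _ _) (on_site_ket_site _ _) _ _ off.
Qed.

Lemma ketbra_mulo_eq0 {x y : V} {A : O} :
  (forall u : V, inner y (apply A u) = 0) -> ketbra x y ** A = zeroo.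
Proof.
move=> yA0; apply: op_ext => i j; rewrite /mulo /ketbra /zeroo.
have col0 : \sum_l (y l)^* * A l j = 0.
  move: (yA0 (fun m => (m == j)%:R)); rewrite /inner /apply.
  by under eq_bigr do rewrite sum_delta_r.
by under eq_bigr do rewrite -mulrA; rewrite -mulr_sumr col0 mulr0.
Qed.

Lemma sqrtC_mul_conj (x : R) : 0 <= x -> Defs.sqrtC x * conjc (Defs.sqrtC x) = x%:C.
Proof. by move=> x_ge0; rewrite /Defs.sqrtC conjc_real -rmorphM -expr2 sqr_sqrtr. Qed.

Definition db_weight (c : constants R) (t : nat) : R := \prod_(1 <= j < t) (Gp c j / Gm c j).

Lemma db_weightS (c : constants R) (k : nat) : (1 <= k)%N ->
  db_weight c k.+1 = db_weight c k * (Gp c k / Gm c k).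
Proof. by move=> k_ge1; rewrite /db_weight big_nat_recr. Qed.

Section Invariant.
Variable c : constants R.
Hypothesis c_ok : constants_ok N c.
Variable rho : O.
Hypotheses (rho_herm : adj rho = rho) (rho_supp : supported_on rho (perp Omega))
  (rho_inv : is_invariant c rho).

Lemma rates_gt0 {k : nat} : (1 <= k < N)%N -> 0 < Gm c k /\ 0 < Gp c k.
Proof. by case: c_ok => _ _ _ _ Gk_gt0 k_in; apply: Gk_gt0; lia. Qed.

Lemma db_weight_gt0 (t : nat) : (t <= N)%N -> 0 < db_weight c t.
Proof.
move=> t_le; rewrite /db_weight big_nat_cond.
apply: (big_ind (fun x => 0 < x)) => //; first exact: mulr_gt0.
move=> j /andP [j_in _].
have [Gm_gt0 Gp_gt0] : 0 < Gm c j /\ 0 < Gp c j by apply: rates_gt0; lia.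
exact: divr_gt0.
Qed.

Lemma gen_supportedE : gen c rho =
  addo (scaleo (- 'i) (commo (Heff c) rho))
       (sumo (fun k => addo (diss (L_m c k) rho) (diss (L_p c k) rho))).
Proof.
have boundary x y s : Omega y -> diss (scaleo s (ketbra x y)) rho = zeroo.
  move=> Oy; apply: (diss_eq0 _ rho_herm).
  rewrite muloZl (ketbra_mulo_eq0 (fun u : V => rho_supp u y Oy)).
  by apply: op_ext => i j; apply: mulr0.
have Lm_plus : diss (L_m_plus c) rho = zeroo by apply: boundary; right; left.
have Lp_plus : diss (L_p_plus c) rho = zeroo by apply: boundary; right; right; left.
have Lm_minus : diss (L_m_minus c) rho = zeroo by apply: boundary; right; right; right.
have Lp_minus : diss L_p_minus rho = zeroo by apply: (diss_eq0 _ rho_herm); apply: mul0o.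
by apply: op_ext => i j; rewrite /gen Lm_plus Lp_plus Lm_minus Lp_minus /zeroo !addr0.
Qed.

Lemma pairing_gen (a b : nat -> C) :
  pairing rho (site_diag a) (site_diag b) (gen c rho) =
  \sum_(1 <= k < N)
    ((Gm c k)%:C * pairing rho (site_diag a) (site_diag b) (diss (Zop k) rho) +
     (Gp c k)%:C * pairing rho (site_diag a) (site_diag b) (diss (adj (Zop k)) rho)).
Proof.
have H_comm g : site_diag g ** (Heff c : O) = Heff c ** site_diag g.
  exact: block_diag_site_diagC _ _ (Heff_block_diag c).
rewrite gen_supportedE pairingD pairingZ pairing_commo // mulr0 add0r pairing_sumo.
apply: eq_big_nat => k k_in; have [Gm_gt0 Gp_gt0] := rates_gt0 k_in.
rewrite pairingD /L_m /L_p !diss_scale !pairingZ.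
by rewrite !sqrtC_mul_conj ?ltW.
Qed.

Lemma split_pairing_eq0 (t k : nat) : (1 <= k < N)%N ->
  pairing rho (site_proj (predC1 t)) (site_proj (pred1 t)) (diss (Zop k) rho) = 0 /\
  pairing rho (site_proj (predC1 t)) (site_proj (pred1 t)) (diss (adj (Zop k)) rho) = 0.
Proof.
pose pairing_t (L : O) := pairing rho (site_proj (predC1 t)) (site_proj (pred1 t)) (diss L rho).
have pairing_t_le0 p q (L : O) : hops p q L -> pairing_t L <= 0.
  move=> hL; rewrite /pairing_t (pairing_split_diss _ rho_herm _ hL) oppr_le0.
  by apply: addr_ge0; apply: mulr_ge0; rewrite ?ler0n ?hsnorm_ge0.
have terms_le0 j : (1 <= j < N)%N ->
    (Gm c j)%:C * pairing_t (Zop j) <= 0 /\ (Gp c j)%:C * pairing_t (adj (Zop j)) <= 0.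
  move=> j_in; have [Gm_gt0 Gp_gt0] := rates_gt0 j_in.
  rewrite !pmulr_rle0 ?ltr0c //.
  by split; [exact: pairing_t_le0 (Zop_hops j) | exact: pairing_t_le0 (hops_adj (Zop_hops j))].
have sum0 : \sum_(1 <= j < N)
    ((Gm c j)%:C * pairing_t (Zop j) + (Gp c j)%:C * pairing_t (adj (Zop j))) = 0.
  rewrite -[RHS](pairing0 rho (site_proj (predC1 t)) (site_proj (pred1 t))) -[zeroo]rho_inv.
  by symmetry; apply: pairing_gen.
move=> k_in; have [Gm_gt0 Gp_gt0] := rates_gt0 k_in.
have [Zt_le0 Zt_adj_le0] := terms_le0 k k_in.
have terms_sum_le0 j : (1 <= j < N)%N ->
    (Gm c j)%:C * pairing_t (Zop j) + (Gp c j)%:C * pairing_t (adj (Zop j)) <= 0.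
  by case/terms_le0; apply: ler_wnDl.
have /eqP := nsumr_nat_eq0 _ _ _ _ terms_sum_le0 sum0 k k_in.
have [GmC_gt0 GpC_gt0] : 0 < (Gm c k)%:C /\ 0 < (Gp c k)%:C by rewrite !ltr0c.
rewrite naddr_eq0 // !mulf_eq0 (gt_eqF GmC_gt0) (gt_eqF GpC_gt0).
by move=> /andP [/eqP Zt0 /eqP Zt_adj0].
Qed.

Lemma Zop_rho_off_site {k : nat} : (1 <= k < N)%N ->
  Zop k ** rho ** site_proj (predC1 k) = zeroo /\
  adj (Zop k) ** rho ** site_proj (predC1 k.+1) = zeroo.
Proof.
move=> k_in; split; apply: hsnorm_eq0.
  have [+ _] := split_pairing_eq0 k k k_in.
  rewrite (pairing_split_diss _ rho_herm _ (Zop_hops k)) eqxx /= mul1r mul0r addr0.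
  by move/eqP; rewrite oppr_eq0 => /eqP.
have [_ +] := split_pairing_eq0 k.+1 k k_in.
rewrite (pairing_split_diss _ rho_herm _ (hops_adj (Zop_hops k))) eqxx /= mul1r mul0r addr0.
by move/eqP; rewrite oppr_eq0 => /eqP.
Qed.

Local Notation W := (site_diag (fun t => (db_weight c t)%:C)).
Local Notation twisted_commutator k :=
  (subo (rho ** Zop k) (scaleo (Gm c k / Gp c k)%:C (Zop k ** rho))).

Lemma weighted_pairing (k : nat) : (1 <= k < N)%N ->
  (Gm c k)%:C * pairing rho W (site_proj predT) (diss (Zop k) rho) +
  (Gp c k)%:C * pairing rho W (site_proj predT) (diss (adj (Zop k)) rho) =
  - (2 * (Gp c k * db_weight c k.+1)%:C) * hsnorm (twisted_commutator k).
Proof.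
move=> k_in; have [Gm_gt0 Gp_gt0] := rates_gt0 k_in.
have [off_k off_k1] := Zop_rho_off_site k_in.
rewrite (pairing_weight_diss _ rho_herm _ (Zop_hops k) off_k).
rewrite (pairing_weight_diss _ rho_herm _ (hops_adj (Zop_hops k)) off_k1).
rewrite trace_sandwich_adj (hsnorm_twisted_commutator _ rho_herm) ?conjc_real //.
rewrite db_weightS; last by case/andP: k_in.
have [GmC_neq0 GpC_neq0] : (Gm c k)%:C != 0 /\ (Gp c k)%:C != 0.
  by rewrite !gt_eqF ?ltr0c.
rewrite !rmorphM fmorphV; field.
by rewrite GmC_neq0 GpC_neq0.
Qed.

Lemma twisted_commutator_eq0 {k : nat} : (1 <= k < N)%N -> twisted_commutator k = zeroo.
Proof.
have coef_gt0 j : (1 <= j < N)%N -> 0 < 2 * (Gp c j * db_weight c j.+1)%:C.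
  move=> j_in; have [_ Gp_gt0] := rates_gt0 j_in.
  have w_gt0 : 0 < db_weight c j.+1 by apply: db_weight_gt0; lia.
  by apply: mulr_gt0; rewrite ?ltr0n // ltr0c; apply: mulr_gt0.
have terms_le0 j : (1 <= j < N)%N ->
    - (2 * (Gp c j * db_weight c j.+1)%:C) * hsnorm (twisted_commutator j) <= 0.
  by move=> /coef_gt0 ?; rewrite mulNr oppr_le0 mulr_ge0 ?hsnorm_ge0 // ltW.
have sum0 : \sum_(1 <= j < N)
    - (2 * (Gp c j * db_weight c j.+1)%:C) * hsnorm (twisted_commutator j) = 0.
  rewrite -[RHS](pairing0 rho W (site_proj predT)).
  rewrite -[zeroo]rho_inv pairing_gen.
  by apply: eq_big_nat => j j_in; rewrite weighted_pairing.
move=> k_in; apply: hsnorm_eq0.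
have /eqP := nsumr_nat_eq0 _ _ _ _ terms_le0 sum0 k k_in.
by rewrite mulf_eq0 oppr_eq0 (gt_eqF (coef_gt0 k k_in)) => /eqP.
Qed.

Lemma rho_Zop_detailed_balance (k : nat) : (1 <= k <= N - 1)%N ->
  rho ** Zop k = scaleo (expR (beta c k))%:C (Zop k ** rho).
Proof.
move=> k_bd; have k_in : (1 <= k < N)%N by lia.
have [Gm_gt0 Gp_gt0] := rates_gt0 k_in.
have -> : expR (beta c k) = Gm c k / Gp c k by rewrite /beta lnK // posrE divr_gt0.
apply: op_ext => i j; apply/eqP; rewrite -subr_eq0; apply/eqP.
exact: (congr1 (fun M : O => M i j) (twisted_commutator_eq0 k_in)).
Qed.

End Invariant.

End Model.

Theorem corollary3p9 (R : realType) (N : nat) (n : nat -> nat)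
  (c : constants R)
  (HN : (2 <= N)%N)
  (Hn_pos : forall k, (1 <= k <= N)%N -> (1 <= n k)%N)
  (Hn_dec : forall k, (1 <= k < N)%N -> (n k.+1 <= n k)%N)
  (Hc : constants_ok N c)
  (rho : op R N n)
  (Hstate : is_state rho)
  (Hinv : is_invariant c rho)
  (Hsupp : supported_on rho (perp Omega)) :
  forall k, (1 <= k <= N - 1)%N ->
    mulo rho (Zop k) = scaleo (expR (beta c k))%:C (mulo (Zop k) rho).
Proof.
exact: rho_Zop_detailed_balance _ Hc _ (positive_op_adj (proj1 Hstate)) Hsupp Hinv.
Qed.
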